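(* Let $r$ be a Hermitian symmetric polynomial in one complex variable $z$ and let $r^*$ be its reflection. Then $r\in\mathcal{Q}(1)$ if and only if $r^*\in\mathcal{Q}(1)$, and $r\in\mathcal{Q}'(1)$ if and only if $r^*\in\mathcal{Q}'(1)$.
   Context: If $r(z,\overline z)=\sum c_{jk}z^j\overline z^k$ has degree $m$ in $z$ (largest $j$ with some $c_{jk}\ne0$), its reflection is the Hermitian symmetric polynomial $r^*(z,\overline z)=|z|^{2m}r(1/z,1/\overline z)$. $\mathcal{Q}(1)$: Hermitian symmetric $r$ with $r=\|F\|^2/\|G\|^2$ for holomorphic polynomial mappings $F,G$, $G\not\equiv0$. $\mathcal{Q}'(1)$: $r$ with $r(z,\overline z)\ge0$ for all $z$ such that there exist a Hermitian symmetric $s\ge0$, not identically $0$, and a holomorphic polynomial mapping $F$ with $rs=\|F\|^2$. *)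

From mathcomp Require Import all_boot all_algebra.
From mathcomp Require Import complex reals.
Set Implicit Arguments. Unset Strict Implicit. Unset Printing Implicit Defensive.
Import GRing.Theory Num.Theory.
Local Open Scope ring_scope.
Local Open Scope complex_scope.

(* A polynomial r(z, zbar) = \sum_{j,k < n} c_{jk} z^j zbar^k in one complex
   variable is represented by its (square, zero-padded) coefficient matrix
   c : 'M[R[i]]_n, with c j k the coefficient of z^j zbar^k. *)
Definition heval (R : realType) (n : nat) (c : 'M[R[i]]_n) (z : R[i]) : R[i] :=
  \sum_(j < n) \sum_(k < n) c j k * z ^+ j * (z^*) ^+ k.

Definition hermitian_sym (R : realType) (n : nat) (c : 'M[R[i]]_n) : Prop :=
  forall j k : 'I_n, c k j = (c j k)^*.

(* Degree of r in z: the largest j with some c_{jk} != 0 (0 for r = 0). *)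
Definition zdeg (R : realType) (n : nat) (c : 'M[R[i]]_n) : nat :=
  \max_(j < n | [exists k : 'I_n, c j k != 0]) (j : nat).

(* Reflection r^*(z, zbar) = |z|^{2m} r(1/z, 1/zbar), m = zdeg r; as a
   polynomial this is \sum_{j,k <= m} c_{m-j, m-k} z^j zbar^k. *)
Definition hreflect (R : realType) (n : nat) (c : 'M[R[i]]_n) : 'M[R[i]]_n :=
  let m := zdeg c in
  \matrix_(j < n, k < n)
    (if (j <= m)%N && (k <= m)%N then c (insubd j (m - j)%N) (insubd k (m - k)%N) else 0).

Definition sqnorm (R : realType) (N : nat) (F : 'I_N -> {poly R[i]}) (z : R[i])
  : R[i] := \sum_(i < N) (F i).[z] * ((F i).[z])^*.

(* Q(1): r = ||F||^2 / ||G||^2 with F, G holomorphic polynomial mappings,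
   G not identically 0 (identity of rational functions, i.e.
   r ||G||^2 = ||F||^2 identically). *)
Definition inQ1 (R : realType) (n : nat) (c : 'M[R[i]]_n) : Prop :=
  exists (N M : nat) (F : 'I_N -> {poly R[i]}) (G : 'I_M -> {poly R[i]}),
    (exists i, G i != 0) /\
    forall z : R[i], heval c z * sqnorm G z = sqnorm F z.

Definition inQ1' (R : realType) (n : nat) (c : 'M[R[i]]_n) : Prop :=
  (forall z : R[i], 0 <= heval c z) /\
  exists (p : nat) (s : 'M[R[i]]_p),
    hermitian_sym s /\ (forall z : R[i], 0 <= heval s z) /\
    (exists z : R[i], heval s z != 0) /\
    exists (N : nat) (F : 'I_N -> {poly R[i]}),
      forall z : R[i], heval c z * heval s z = sqnorm F z.

(* For z <> 0 the reflection satisfies r^*(z) = |z|^{2m} r(1/z) and, symmetrically,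
   r(z) = |z|^{2m} r^*(1/z); so it suffices to show that Q(1) and Q'(1) are stable
   under this transformation. Off the origin, an identity r ||G||^2 = ||F||^2
   (or r s = ||F||^2) becomes one for the reflection once F, G (and s) are replaced
   by their own reflections z^e F(1/z), which are again polynomials for e large.
   The identities and the nonnegativity then extend to z = 0 because, on the real
   axis, all the functions involved are polynomials, hence continuous. *)

From mathcomp Require Import all_boot all_algebra.
From mathcomp Require Import complex reals.
From mathcomp Require Import all_order ring lra zify.
Set Implicit Arguments. Unset Strict Implicit. Unset Printing Implicit Defensive.
Import GRing.Theory Num.Theory Order.TTheory.
Local Open Scope complex_scope.
Local Open Scope ring_scope.

Section PolyReflection.
Variable F : fieldType.

Lemma expr_subn (z : F) e i : z != 0 -> (i <= e)%N ->
  z ^+ (e - i) = z ^+ e * z^-1 ^+ i.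
Proof. by move=> z0 ie; rewrite exprVn -{2}(subnK ie) exprD mulfK // expf_neq0. Qed.

Definition reflp (e : nat) (p : {poly F}) : {poly F} :=
  \sum_(i < size p) p`_i *: 'X^(e - i).

Lemma horner_reflp e (p : {poly F}) z : z != 0 -> (size p <= e.+1)%N ->
  (reflp e p).[z] = z ^+ e * p.[z^-1].
Proof.
move=> z0 pe; rewrite /reflp horner_sum horner_coef mulr_sumr.
apply: eq_bigr => i _; rewrite hornerZ hornerXn expr_subn //; first exact: mulrCA.
by rewrite -ltnS (leq_trans (ltn_ord i)).
Qed.

Lemma coef_reflp e (p : {poly F}) i : (size p <= e.+1)%N -> (i < size p)%N ->
  (reflp e p)`_(e - i) = p`_i.
Proof.
move=> pe ip; have le_e k : (k < size p -> k <= e)%N by move/leq_trans/(_ pe).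
rewrite /reflp coef_sum (bigD1 (Ordinal ip)) //= coefZ coefXn eqxx mulr1.
rewrite big1 ?addr0 // => j ji; rewrite coefZ coefXn eqn_sub2lE ?le_e //.
have ij : (i == j) = false by apply: contraNF ji => /eqP ij; apply/eqP/ord_inj.
by rewrite ij mulr0.
Qed.

Lemma reflp_eq0 e (p : {poly F}) : (size p <= e.+1)%N -> (reflp e p == 0) = (p == 0).
Proof.
move=> pe; apply/eqP/eqP => [r0|->]; last by rewrite /reflp size_poly0 big_ord0.
apply/eqP; rewrite -lead_coef_eq0 lead_coefE; apply/negPn/negP => p0.
have ip : ((size p).-1 < size p)%N by rewrite prednK // lt0n size_poly_eq0 -lead_coef_eq0.
by rewrite -(coef_reflp pe ip) r0 coef0 eqxx in p0.
Qed.

End PolyReflection.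

Section Reflection.
Variable R : realType.
Local Notation C := R[i].

Definition hevalf (N : nat) (f : nat -> nat -> C) (z : C) : C :=
  \sum_(j < N) \sum_(k < N) f j k * z ^+ j * z^* ^+ k.

Definition supported_in (K : nat) (f : nat -> nat -> C) : Prop :=
  forall j k, (K <= j)%N || (K <= k)%N -> f j k = 0.

Lemma eq_hevalf N f g (z : C) : (forall j k, (j < N)%N -> (k < N)%N -> f j k = g j k) ->
  hevalf N f z = hevalf N g z.
Proof.
by move=> fg; apply: eq_bigr => j _; apply: eq_bigr => k _; rewrite fg.
Qed.

Lemma hevalf_widen K N f (z : C) : (K <= N)%N -> supported_in K f -> hevalf N f z = hevalf K f z.
Proof.
move=> KN fK; rewrite /hevalf.
rewrite (big_ord_widen _ (fun j => \sum_(k < K) f j k * z ^+ j * z^* ^+ k) KN).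
rewrite [RHS]big_mkcond; apply: eq_bigr => j _; case: ltnP => jK; last first.
  by apply: big1 => k _; rewrite fK ?jK // !mul0r.
rewrite (big_ord_widen _ (fun k => f j k * z ^+ j * z^* ^+ k) KN) [RHS]big_mkcond.
by apply: eq_bigr => k _; case: ltnP => kK //; rewrite fK ?kK ?orbT // !mul0r.
Qed.

Lemma hevalf_supp K N f (z : C) : supported_in K f -> supported_in N f -> hevalf N f z = hevalf K f z.
Proof.
move=> fK fN.
by rewrite -(@hevalf_widen N (maxn N K)) ?leq_maxl // (@hevalf_widen K) ?leq_maxr.
Qed.

Lemma hevalf_rev E f (z : C) : z != 0 ->
  hevalf E.+1 (fun j k => f (E - j)%N (E - k)%N) z
  = (z * z^*) ^+ E * hevalf E.+1 f z^-1.
Proof.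
move=> z0; have z'0 : z^* != 0 by rewrite conjC_eq0.
rewrite /hevalf mulr_sumr (reindex_inj rev_ord_inj); apply: eq_bigr => j _.
rewrite mulr_sumr (reindex_inj rev_ord_inj); apply: eq_bigr => k _ /=.
have jE : (j <= E)%N by rewrite -ltnS.
have kE : (k <= E)%N by rewrite -ltnS.
rewrite !subSS !subKn // (expr_subn z0 jE) (expr_subn z'0 kE) fmorphV exprMn; ring.
Qed.

(* Zero-padding a coefficient matrix, so that matrices of different sizes can be
   compared and reflected. *)
Definition mxcoef n (c : 'M[C]_n) (j k : nat) : C :=
  if @insub _ _ 'I_n j is Some j' then
    if @insub _ _ 'I_n k is Some k' then c j' k' else 0
  else 0.

Lemma mxcoefE n (c : 'M[C]_n) (j k : 'I_n) : mxcoef c j k = c j k.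
Proof. by rewrite /mxcoef (valK j) (valK k). Qed.

Lemma insub_ordK n j (j' : 'I_n) : insub j = Some j' -> val j' = j.
Proof. by move=> ej; have := insubK 'I_n j; rewrite ej. Qed.

Lemma mxcoef_supp n (c : 'M[C]_n) : supported_in n (mxcoef c).
Proof.
move=> j k jk; rewrite /mxcoef.
case ej: insub => [j'|//]; case ek: insub => [k'|//].
by move: jk; rewrite -(insub_ordK ej) -(insub_ordK ek) => /orP[]; rewrite leqNgt ltn_ord.
Qed.

Lemma heval_hevalf K n (c : 'M[C]_n) (z : C) : supported_in K (mxcoef c) ->
  heval c z = hevalf K (mxcoef c) z.
Proof.
move=> cK; rewrite (hevalf_supp z (mxcoef_supp c) cK).
by apply: eq_bigr => j _; apply: eq_bigr => k _; rewrite mxcoefE.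
Qed.

Lemma eq_heval n1 n2 (a : 'M[C]_n1) (b : 'M[C]_n2) :
  mxcoef a =2 mxcoef b -> heval a =1 heval b.
Proof.
move=> ab z; rewrite (heval_hevalf z (mxcoef_supp a)) (@heval_hevalf n1).
  by apply: eq_hevalf => j k _ _; rewrite ab.
by move=> j k jk; rewrite -ab mxcoef_supp.
Qed.

Lemma mxcoef_herm n (c : 'M[C]_n) : hermitian_sym c ->
  forall j k, mxcoef c k j = (mxcoef c j k)^*.
Proof.
move=> hc j k; rewrite /mxcoef.
case: (@insub _ _ 'I_n j) => [j'|]; case: (@insub _ _ 'I_n k) => [k'|];
  by rewrite ?conjC0.
Qed.

Definition is_reflection m n1 n2 (a : 'M[C]_n1) (b : 'M[C]_n2) : Prop :=
  forall z : C, z != 0 -> heval a z = (z * z^*) ^+ m * heval b z^-1.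

Definition mxreflect n E (c : 'M[C]_n) : 'M[C]_E.+1 :=
  \matrix_(j, k) mxcoef c (E - j) (E - k).

Lemma mxcoef_mxreflect n E (c : 'M[C]_n) j k :
  mxcoef (mxreflect E c) j k
  = if (j <= E)%N && (k <= E)%N then mxcoef c (E - j) (E - k) else 0.
Proof.
case: (ltnP j E.+1) => jE; last by rewrite mxcoef_supp ?jE // (leqNgt j) jE.
case: (ltnP k E.+1) => kE; last by rewrite mxcoef_supp ?kE ?orbT // (leqNgt k) kE andbF.
rewrite -[j]/(val (Ordinal jE)) -[k]/(val (Ordinal kE)) mxcoefE mxE.
by rewrite -ltnS jE -ltnS kE.
Qed.

Lemma mxreflect_herm n E (c : 'M[C]_n) :
  hermitian_sym c -> hermitian_sym (mxreflect E c).
Proof. by move=> hc j k; rewrite !mxE mxcoef_herm. Qed.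

Lemma mxreflect_reflection n E (c : 'M[C]_n) : supported_in E.+1 (mxcoef c) ->
  is_reflection E (mxreflect E c) c.
Proof.
move=> cE z z0; rewrite (heval_hevalf z (mxcoef_supp _)) (heval_hevalf _ cE) -hevalf_rev //.
by apply: eq_hevalf => j k jE kE; rewrite mxcoef_mxreflect -ltnS jE -ltnS kE.
Qed.

Lemma zdeg_le n (c : 'M[C]_n) : (zdeg c <= n.-1)%N.
Proof. by apply/bigmax_leqP => j _; rewrite -ltnS (leq_trans (ltn_ord j)) // leqSpred. Qed.

Lemma leq_zdeg n (c : 'M[C]_n) (j k : 'I_n) : c j k != 0 -> (j <= zdeg c)%N.
Proof.
move=> cjk; apply: (leq_bigmax_cond (F := fun j : 'I_n => nat_of_ord j)).
by apply/existsP; exists k.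
Qed.

Lemma mxcoef_zdeg n (c : 'M[C]_n) : hermitian_sym c -> supported_in (zdeg c).+1 (mxcoef c).
Proof.
have rows j k : (zdeg c < j)%N -> mxcoef c j k = 0.
  move=> jm; rewrite /mxcoef; case ej: insub => [j'|//]; case: insub => [k'|//].
  by apply/eqP; apply: contraTT jm => /leq_zdeg; rewrite (insub_ordK ej) -leqNgt.
move=> hc j k /orP[jm|km]; first exact: rows.
by rewrite -[LHS]conjCK -mxcoef_herm // rows // conjC0.
Qed.

Lemma mxcoef_hreflect n (c : 'M[C]_n) :
  mxcoef (hreflect c) =2 mxcoef (mxreflect (zdeg c) c).
Proof.
move=> j k; rewrite mxcoef_mxreflect; set m := zdeg c.
have mn := zdeg_le c.
(* an index in [n, m] exists only for the empty matrix *)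
have empty i : (n <= i)%N -> (i <= m)%N -> forall j' k', mxcoef c j' k' = 0.
  by move=> ni im j' k'; rewrite mxcoef_supp // (_ : n = 0%N) //; lia.
case: (ltnP j n) => jn; last first.
  rewrite mxcoef_supp ?jn //; case: ifP => // /andP[jm _]; by rewrite (empty j).
case: (ltnP k n) => kn; last first.
  rewrite mxcoef_supp ?kn ?orbT //; case: ifP => // /andP[_ km]; by rewrite (empty k).
rewrite -[j]/(val (Ordinal jn)) -[k]/(val (Ordinal kn)) mxcoefE mxE /= -/m.
case: ifP => // /andP[jm km].
have mjn : (m - j < n)%N by lia.
have mkn : (m - k < n)%N by lia.
by rewrite -mxcoefE !val_insubd /= mjn mkn.
Qed.

Lemma hreflect_reflection n (c : 'M[C]_n) :
  hermitian_sym c -> is_reflection (zdeg c) (hreflect c) c.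
Proof.
move=> hc z z0; rewrite (eq_heval (mxcoef_hreflect c)) mxreflect_reflection //.
exact: mxcoef_zdeg.
Qed.

Lemma conj_realc (t : R) : (t%:C)^* = t%:C.
Proof. exact: conjc_real. Qed.

Lemma normc_ReE (x : C) : `|x| = (complex.Re `|x|)%:C.
Proof. by rewrite RRe_real // normr_real. Qed.

Lemma normc_Re_gt0 (x : C) : x != 0 -> 0 < complex.Re `|x|.
Proof.
by move=> x0; have := normr_gt0 x; rewrite x0 normc_ReE -[0]/(0%:C) ltcR.
Qed.

Lemma realc_neq0 (t : R) : 0 < t -> t%:C != 0.
Proof. by move=> t0; rewrite lt0r_neq0 // -[0]/(0%:C) ltcR. Qed.

Lemma poly_near0 (p : {poly C}) (e : R) : 0 < e ->
  exists2 t : R, 0 < t & `|p.[t%:C] - p.[0]| < e%:C.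
Proof.
move=> e0; pose B := \sum_(i < size p) `|p`_i|; pose b := complex.Re B.
have bE : B = b%:C by rewrite /b RRe_real // ger0_real // sumr_ge0.
have b0 : 0 <= b by rewrite -ler0c -bE sumr_ge0.
pose t := Num.min 1 (e / (b + 1)).
have t0 : 0 < t by rewrite lt_min ltr01 divr_gt0 // ltr_wpDl.
have t1 : t <= 1 by rewrite ge_min lexx.
have tb : t * b < e.
  have : t * (b + 1) <= e by rewrite -ler_pdivlMr ?ge_min ?lexx ?orbT // ltr_wpDl.
  nra.
have monomial i : `|t%:C ^+ i - 0 ^+ i| <= t%:C.
  case: i => [|i]; first by rewrite subrr normr0 ler0c ltW.
  rewrite expr0n subr0 normrX ger0_norm; last by rewrite ler0c ltW.
  rewrite -rmorphXn lecR exprS.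
  rewrite -[leRHS]mulr1; apply: ler_wpM2l; first exact: ltW.
  by rewrite exprn_ile1 // ltW.
exists t => //; rewrite !horner_coef -sumrB.
apply: le_lt_trans (ler_norm_sum _ _ _) _; apply: (@le_lt_trans _ _ (B * t%:C)).
  by rewrite mulr_suml; apply: ler_sum => i _; rewrite -mulrBr normrM ler_wpM2l.
by rewrite bE -rmorphM ltcR mulrC.
Qed.

Lemma horner0_ge0 (p : {poly C}) :
  (forall t : R, 0 < t -> 0 <= p.[t%:C]) -> 0 <= p.[0].
Proof.
move=> p_ge0; set x := p.[0]; suff -> : x = `|x| by [].
apply/eqP; rewrite -subr_eq0; apply: contraT => dx; set d := x - `|x| in dx.
have e0 : 0 < complex.Re `|d| / 2 by rewrite divr_gt0 ?normc_Re_gt0 ?ltr0n.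
have [t t0] := poly_near0 p e0; set y := p.[t%:C] => yx.
have yE : y = `|y| by rewrite ger0_norm // p_ge0.
(* [d = (x - y) + (|y| - |x|)] and both summands have norm at most [|y - x|] *)
have : `|d| <= `|y - x| + `|y - x|.
  rewrite /d (_ : x - `|x| = (x - y) + (`|y| - `|x|)); last by rewrite -yE; ring.
  apply: le_trans (ler_normD _ _) _; apply: lerD; first by rewrite distrC.
  exact: ler_dist_dist.
move=> d_le; have : (complex.Re `|d| / 2)%:C + (complex.Re `|d| / 2)%:C <= `|d|.
  by rewrite -rmorphD [leRHS]normc_ReE lecR; set e := complex.Re _; lra.
by move/(lt_le_trans (ltrD yx yx))/(le_lt_trans d_le); rewrite ltxx.
Qed.

Lemma horner0_neq0 (p : {poly C}) : p.[0] != 0 ->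
  exists2 t : R, 0 < t & p.[t%:C] != 0.
Proof.
move=> p0; have [t t0 pt] := poly_near0 p (normc_Re_gt0 p0).
exists t => //; apply: contraTneq pt => ->.
by rewrite sub0r normrN -normc_ReE ltxx.
Qed.

Definition real_axis_poly (f : C -> C) : Prop :=
  exists p : {poly C}, forall t : R, f t%:C = p.[t%:C].

Lemma real_axis_polyM f g : real_axis_poly f -> real_axis_poly g ->
  real_axis_poly (fun z => f z * g z).
Proof. by move=> [p fp] [q gq]; exists (p * q) => t; rewrite hornerM fp gq. Qed.

Lemma real_axis_poly_heval n (c : 'M[C]_n) : real_axis_poly (heval c).
Proof.
exists (\sum_(j < n) \sum_(k < n) c j k *: 'X^(j + k)) => t.
rewrite /heval horner_sum; apply: eq_bigr => j _.
rewrite horner_sum; apply: eq_bigr => k _.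
by rewrite hornerZ hornerXn conj_realc exprD mulrA.
Qed.

Lemma real_axis_poly_sqnorm N (F : 'I_N -> {poly C}) : real_axis_poly (sqnorm F).
Proof.
exists (\sum_(i < N) F i * map_poly Num.conj (F i)) => t.
rewrite /sqnorm horner_sum; apply: eq_bigr => i _.
by rewrite hornerM -horner_map /= conj_realc.
Qed.

Lemma real_axis_poly_ge0 f : real_axis_poly f ->
  (forall z, z != 0 -> 0 <= f z) -> forall z, 0 <= f z.
Proof.
move=> [p fp] f_ge0 z; have [->|] := eqVneq z 0; last exact: f_ge0.
have := fp 0; rewrite raddf0 => ->; apply: horner0_ge0 => t t0.
by rewrite -fp f_ge0 ?realc_neq0.
Qed.

Lemma eq_real_axis_poly f g : real_axis_poly f -> real_axis_poly g ->
  (forall z, z != 0 -> f z = g z) -> f =1 g.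
Proof.
have sub_ge0 u v : real_axis_poly u -> real_axis_poly v ->
    (forall z, z != 0 -> u z = v z) -> forall z, 0 <= u z - v z.
  move=> [p up] [q vq] uv; apply: real_axis_poly_ge0 => [|z z0]; last first.
    by rewrite uv ?subrr.
  by exists (p - q) => t; rewrite hornerD hornerN up vq.
move=> fr gr fg z; apply/le_anti/andP; split; rewrite -subr_ge0;
  by apply: sub_ge0 => // w w0; rewrite fg.
Qed.

Lemma real_axis_poly_neq0 f : real_axis_poly f ->
  (exists z, f z != 0) -> exists2 z, z != 0 & f z != 0.
Proof.
move=> [p fp] [z fz]; have [z0|] := eqVneq z 0; last by exists z.
have [t t0 pt] : exists2 t : R, 0 < t & p.[t%:C] != 0.
  by apply: horner0_neq0; have := fp 0; rewrite raddf0 => <-; rewrite -{1}z0.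
by exists t%:C; rewrite ?realc_neq0 ?fp.
Qed.

Lemma is_reflection_sym m n1 n2 (a : 'M[C]_n1) (b : 'M[C]_n2) :
  is_reflection m a b -> is_reflection m b a.
Proof.
move=> ab z z0; rewrite ab ?invr_neq0 // invrK mulrA -exprMn fmorphV.
have z'0 : z^* != 0 by rewrite conjC_eq0.
by rewrite mulrACA !mulfV // mulr1 expr1n mul1r.
Qed.

Lemma sqnorm_reflp N e (F : 'I_N -> {poly C}) (z : C) : z != 0 ->
  (forall i, size (F i) <= e.+1)%N ->
  sqnorm (fun i => reflp e (F i)) z = (z * z^*) ^+ e * sqnorm F z^-1.
Proof.
move=> z0 Fe; rewrite /sqnorm mulr_sumr; apply: eq_bigr => i _.
by rewrite horner_reflp // rmorphM rmorphXn exprMn mulrACA.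
Qed.

Lemma heval_ge0_reflection m n1 n2 (a : 'M[C]_n1) (b : 'M[C]_n2) :
  is_reflection m a b -> (forall z, 0 <= heval b z) -> forall z, 0 <= heval a z.
Proof.
move=> ab b_ge0; apply: real_axis_poly_ge0 => [|z z0]; first exact: real_axis_poly_heval.
by rewrite ab // mulr_ge0 // exprn_ge0 // mulcJ_ge0.
Qed.

Lemma inQ1_reflection m n1 n2 (a : 'M[C]_n1) (b : 'M[C]_n2) :
  is_reflection m a b -> inQ1 b -> inQ1 a.
Proof.
move=> ab [N [M [F [G [[i0 Gi0] bGF]]]]].
pose d := (\max_i size (F i) + \max_i size (G i))%N.
have Fd i : (size (F i) <= (m + d).+1)%N.
  by apply: leq_trans (@leq_bigmax _ (fun i => size (F i)) i) _; lia.
have Gd i : (size (G i) <= d.+1)%N.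
  by apply: leq_trans (@leq_bigmax _ (fun i => size (G i)) i) _; lia.
exists N, M, (fun i => reflp (m + d) (F i)), (fun i => reflp d (G i)); split.
  by exists i0; rewrite reflp_eq0.
apply: eq_real_axis_poly => [||z z0].
- exact/real_axis_polyM/real_axis_poly_sqnorm/real_axis_poly_heval.
- exact: real_axis_poly_sqnorm.
rewrite ab // !sqnorm_reflp // -bGF exprD.
by set u := (z * _) ^+ m; set v := (z * _) ^+ d; ring.
Qed.

Lemma inQ1'_reflection m n1 n2 (a : 'M[C]_n1) (b : 'M[C]_n2) :
  is_reflection m a b -> inQ1' b -> inQ1' a.
Proof.
move=> ab [b_ge0 [p [s [s_herm [s_ge0 [s_neq0 [N [F bsF]]]]]]]].
split; first exact: heval_ge0_reflection ab b_ge0.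
pose d := \max_i size (F i); pose E := (p + d)%N.
have sE : supported_in E.+1 (mxcoef s) by move=> j k jk; apply: mxcoef_supp; lia.
have s's := mxreflect_reflection sE.
exists E.+1, (mxreflect E s); split; first exact: mxreflect_herm.
split; first exact: heval_ge0_reflection s's s_ge0.
split.
  have [z z0 sz] := real_axis_poly_neq0 (real_axis_poly_heval s) s_neq0.
  exists z^-1; rewrite s's ?invr_neq0 // invrK mulf_neq0 // expf_neq0 //.
  by rewrite mulf_neq0 ?conjC_eq0 ?invr_eq0.
have FE i : (size (F i) <= (m + E).+1)%N.
  by apply: leq_trans (@leq_bigmax _ (fun i => size (F i)) i) _; lia.
exists N, (fun i => reflp (m + E) (F i)).
apply: eq_real_axis_poly => [||z z0].
- exact/real_axis_polyM/real_axis_poly_heval/real_axis_poly_heval.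
- exact: real_axis_poly_sqnorm.
rewrite ab // s's // sqnorm_reflp // -bsF exprD.
by set u := (z * _) ^+ m; set v := (z * _) ^+ E; ring.
Qed.

End Reflection.

Theorem lemma4p1 (R : realType) (n : nat) (r : 'M[R[i]]_n) :
  hermitian_sym r ->
  (inQ1 r <-> inQ1 (hreflect r)) /\ (inQ1' r <-> inQ1' (hreflect r)).
Proof.
move=> r_herm; have rr := hreflect_reflection r_herm; have rr' := is_reflection_sym rr.
split; split.
- exact: inQ1_reflection rr.
- exact: inQ1_reflection rr'.
- exact: inQ1'_reflection rr.
- exact: inQ1'_reflection rr'.
Qed.
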